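(* Every connected threshold graph on $n\geq 2$ vertices is isomorphic to an induced subgraph of the anti-regular graph $A_{2n-2}$. More precisely, let $G$ be a connected threshold graph with binary string $b=0^{s_1}1^{t_1}\cdots 0^{s_k}1^{t_k}$ (all $s_i,t_i\geq 1$) and $n=\sum_{i=1}^k(s_i+t_i)$ vertices. Let $N=2(n-k)$ if $s_1=1$ and $N=2(n-k)-1$ if $s_1\geq 2$. Then $G$ is an induced subgraph of $A_N$, and $A_N$ is the smallest anti-regular graph containing $G$ as an induced subgraph.
   Context: Threshold graphs from binary strings: given $b=b_1b_2\cdots b_n\in\{0,1\}^n$ with $b_1=0$, let $G_1$ be a single vertex, and for $j=2,\ldots,n$ obtain $G_j$ from $G_{j-1}$ by adding a new vertex which is adjacent to all previous vertices if $b_j=1$ and isolated if $b_j=0$; $G(b)=G_n$ and $b$ is called the binary string of $G(b)$. $G(b)$ is connected iff $b_n=1$. The notation $0^{s}$ (resp. $1^t$) denotes $s$ consecutive zeros (resp. $t$ consecutive ones). The anti-regular graph $A_m$ is $G(b)$ with $b=0101\cdots01$ (length $m$) when $m$ is even and $b=00101\cdots01$ (length $m$) when $m$ is odd. *)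

From mathcomp Require Import all_boot.
Set Implicit Arguments. Unset Strict Implicit. Unset Printing Implicit Defensive.

(* A binary string b = b_1 ... b_n is a [seq bool] (true = 1, false = 0),
   0-indexed: b_j (1-indexed) is [nth false b (j-1)].
   The threshold graph G(b) has vertex set 'I_(size b); vertex j (added at
   step j) is adjacent to all earlier vertices iff b_j = 1. Hence for i <> j,
   i ~ j iff the later of the two vertices has bit 1. *)
Definition tadj (b : seq bool) (i j : 'I_(size b)) : bool :=
  (i != j) && nth false b (maxn i j).

Definition induced_sub (b c : seq bool) : Prop :=
  exists f : 'I_(size b) -> 'I_(size c),
    injective f /\ forall i j, tadj i j = tadj (f i) (f j).

Definition antireg_str (m : nat) : seq bool :=
  if ~~ odd m then [seq odd i | i <- iota 0 m]
  else false :: [seq odd i | i <- iota 0 m.-1].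

Definition block_str (s t : seq nat) : seq bool :=
  flatten [seq nseq x.1 false ++ nseq x.2 true | x <- zip s t].

From mathcomp Require Import all_boot zify.
Set Implicit Arguments. Unset Strict Implicit. Unset Printing Implicit Defensive.

(* Index vertices and bits from 0.  In A_M the vertex p > 0 is joined to all
   earlier vertices iff p + M is odd.  Hence an increasing map F from the
   vertices of G(b) into A_M is an embedding as soon as F j + M has the parity
   of b_j for j > 0.  Let sigma_j be the number of switches b_i <> b_(i+1) with
   1 <= i < j.  The map F j = 2j - 1 - sigma_j embeds G(b) into A_N with
   N = 2n - 2 - sigma_(n-1), and for a block string sigma_(n-1) is 2k - 2 or
   2k - 1 according as s_1 = 1 or s_1 >= 2, which gives the N of the statement.
   Conversely, let G(b) embed into A_M.  Vertices with the same sigma are twins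
   of G(b), whereas two image vertices whose predecessors also lie in the image
   are separated by one of these predecessors.  At least 2n - M - 1 image
   vertices have their predecessor in the image, and they lie in distinct twin
   classes, of which there are sigma_(n-1) + 1; so M >= 2n - 2 - sigma_(n-1). *)

Definition antireg_adj (M p q : nat) : bool := (p != q) && odd (maxn p q + M).

Lemma size_antireg M : size (antireg_str M) = M.
Proof.
by rewrite /antireg_str; case: ifP => /= [|/negbFE]; rewrite size_map size_iota //; case: M.
Qed.

Lemma nth_antireg M p : nth false (antireg_str M) p = (0 < p < M) && odd (p + M).
Proof.
rewrite /antireg_str; case: ifP => [/negbTE oddMF | /negbFE oddM] /=.
  have [ltpM | geMp] := ltnP p M; last by rewrite nth_default ?size_map ?size_iota // andbF.
  rewrite (nth_map 0) ?size_iota // nth_iota // add0n oddD oddMF addbF.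
  by case: p ltpM => [|p] //= ->.
case: p => [|p] //=; have [ltpM | geMp] := ltnP p M.-1.
  rewrite (nth_map 0) ?size_iota // nth_iota // add0n oddD oddM addbT negbK.
  by rewrite -ltn_predRL ltpM.
rewrite nth_default ?size_map ?size_iota //.
by rewrite -ltn_predRL ltnNge geMp.
Qed.

Lemma tadj_antireg M (p q : 'I_(size (antireg_str M))) :
  tadj p q = antireg_adj M p q.
Proof.
rewrite /tadj /antireg_adj nth_antireg.
have [->|neq_pq] := eqVneq p q; first by rewrite !eqxx.
have neq : nat_of_ord p != q := neq_pq.
have ltM : maxn p q < M by rewrite gtn_max -{2 4}(size_antireg M) !ltn_ord.
have pos : 0 < maxn p q by lia.
by rewrite neq pos ltM.
Qed.

Lemma induced_sub_trans b c d :
  induced_sub b c -> induced_sub c d -> induced_sub b d.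
Proof.
move=> [f [f_inj f_adj]] [g [g_inj g_adj]].
by exists (g \o f); split => [|i j]; [exact: inj_comp | rewrite f_adj g_adj].
Qed.

Lemma induced_sub_antireg_parity b M (F : nat -> nat) :
  (forall j, j.+1 < size b -> F j < F j.+1) ->
  (0 < size b -> F (size b).-1 < M) ->
  (forall j, 0 < j < size b -> odd (F j + M) = nth false b j) ->
  induced_sub b (antireg_str M).
Proof.
move=> F_incr F_bound F_odd; pose D := [pred j | j < size b].
have F_lt : {in D &, {homo F : i j / i < j}}.
  apply: homo_ltn_in => [y x z /ltn_trans | i j _ jD k /andP [_ lt_kj] | j _ /F_incr //].
    exact.
  exact: ltn_trans lt_kj jD.
have F_le := ltnW_homo_in F_lt.
have F_inj := incn_inj_in (leq_mono_in F_lt).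
have D_ord (i : 'I_(size b)) : nat_of_ord i \in D := ltn_ord i.
have F_ord (i : 'I_(size b)) : F i < size (antireg_str M).
  rewrite size_antireg; apply: leq_ltn_trans (F_bound _).
    by have lt_i := ltn_ord i; apply: F_le; rewrite ?inE; lia.
  exact: leq_ltn_trans (ltn_ord i).
exists (fun i => Ordinal (F_ord i)); split.
  by move=> i j [] /F_inj eq_ij; apply/val_inj/eq_ij; apply: ltn_ord.
move=> i j; rewrite tadj_antireg /tadj /antireg_adj /=.
rewrite (inj_in_eq F_inj) ?D_ord //.
have [->|neq_ij] := eqVneq i j; first by rewrite eqxx.
have -> : maxn (F i) (F j) = F (maxn i j).
  by case: (leqP i j) => [/F_le le_ij | /ltnW /F_le le_ji];
    [apply/maxn_idPr/le_ij | apply/maxn_idPl/le_ji].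
have neq : nat_of_ord i != j := neq_ij.
by rewrite neq F_odd // gtn_max !ltn_ord andbT; lia.
Qed.

Lemma induced_sub_antireg_leq M M' :
  M <= M' -> induced_sub (antireg_str M) (antireg_str M').
Proof.
move=> /subnKC <-; set d := M' - M.
apply: (@induced_sub_antireg_parity _ _ (addn^~ d)); rewrite size_antireg.
- by move=> j _; rewrite ltn_add2r.
- by move=> M_gt0; rewrite ltn_add2r ltn_predL.
- by move=> j j_range; rewrite nth_antireg j_range addnACA addnn oddD odd_double addbF.
Qed.

Definition switches (b : seq bool) (j : nat) : nat :=
  \sum_(1 <= i < j) (nth false b i != nth false b i.+1).

Lemma switchesS b j :
  switches b j.+1 = switches b j + ((0 < j) && (nth false b j != nth false b j.+1)).
Proof.
by rewrite /switches; case: j => [|j]; [rewrite !big_geq | rewrite big_nat_recr].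
Qed.

Lemma leq_switches b : {homo switches b : i j / i <= j}.
Proof.
by apply: homo_leq => [//|j i k /leq_trans|j]; [apply | rewrite switchesS leq_addr].
Qed.

Lemma switches_le_pred b j : switches b j <= j.-1.
Proof.
elim: j => [|j IH]; first by rewrite /switches big_geq.
rewrite switchesS; case: j IH => [|j] /=; first by rewrite /switches big_geq.
by case: (_ != _) => /=; lia.
Qed.

Lemma odd_switches b j :
  0 < j -> odd (switches b j) = (nth false b 1 != nth false b j).
Proof.
elim: j => [|[|j] IH] // _; first by rewrite /switches big_geq ?eqxx.
rewrite switchesS oddD IH //=.
by case: (nth false b 1); case: (nth false b j.+1); case: (nth false b j.+2).
Qed.

Lemma eq_switches_nth b i j : 0 < i <= j -> switches b i = switches b j ->
  nth false b i = nth false b j.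
Proof.
case/andP=> i_gt0; elim: j => [|j IH]; first by rewrite leqn0 => /eqP ->.
rewrite leq_eqVlt ltnS => /orP [/eqP -> // | le_ij].
have j_gt0 : 0 < j := leq_trans i_gt0 le_ij.
have := leq_switches b le_ij; rewrite switchesS j_gt0 /=.
by case: eqP => [<- | _] /= le_sw eq_sw; [apply: IH le_ij _; lia | lia].
Qed.

Lemma induced_sub_antireg_switches b :
  2 <= size b -> last false b = true ->
  induced_sub b (antireg_str ((2 * size b).-2 - switches b (size b).-1)).
Proof.
move=> b_ge2 b_last; have sw_le := switches_le_pred b.
(* Equal consecutive bits are placed two apart, a switch at adjacent positions. *)
apply: (@induced_sub_antireg_parity _ _ (fun j => (2 * j).-1 - switches b j)).
- move=> j _; rewrite switchesS; have := sw_le j.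
  by case: j => [|j] /=; [lia | case: (_ != _) => /=; lia].
- by have := sw_le (size b).-1; lia.
- move=> j /andP [j_gt0 lt_jn].
  have last_gt0 : 0 < (size b).-1 by lia.
  have := odd_switches b last_gt0; rewrite nth_last b_last.
  have := odd_switches b j_gt0; have := sw_le j; have := sw_le (size b).-1.
  lia.
Qed.

Definition twins b (u v : 'I_(size b)) : Prop :=
  forall w, w != u -> w != v -> tadj u w = tadj v w.

Lemma switches_twins b (u v : 'I_(size b)) :
  switches b u = switches b v -> twins u v.
Proof.
wlog le_uv : u v / u <= v.
  move=> twins_le eq_sw; case: (leqP u v) => [le_uv | /ltnW le_vu]; first exact: twins_le.
  by move=> w wu wv; rewrite (twins_le v u le_vu (esym eq_sw) w wv wu).
move=> eq_sw w wu wv.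
have nth_v k : 0 < k -> u <= k <= v -> nth false b k = nth false b v.
  move=> k_gt0 /andP [le_uk le_kv]; apply: eq_switches_nth; first by rewrite k_gt0.
  by apply/anti_leq; rewrite leq_switches //= -eq_sw leq_switches.
have neq_wu : nat_of_ord w != u := wu; have neq_wv : nat_of_ord w != v := wv.
rewrite /tadj eq_sym wu eq_sym wv /=.
case: (ltnP v w) => [lt_vw | le_wv].
  by have [] := ltnP u w => //; lia.
by case: (ltnP u w) => [lt_uw | le_wu]; rewrite nth_v //; lia.
Qed.

Lemma card_twin_free b (P : {pred 'I_(size b)}) :
  {in P &, forall u v, twins u v -> u = v} ->
  #|P| <= (switches b (size b).-1).+1.
Proof.
move=> P_free; set m := switches b (size b).-1.
have sw_le (u : 'I_(size b)) : switches b u < m.+1.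
  by rewrite ltnS; apply: leq_switches; have := ltn_ord u; lia.
pose g (u : 'I_(size b)) : 'I_m.+1 := inord (switches b u).
have g_inj : {in P &, injective g}.
  move=> u v Pu Pv /(congr1 (@nat_of_ord _)); rewrite !inordK // => /switches_twins.
  exact: P_free.
by rewrite -[m.+1]card_ord (leq_card_in _ _ g_inj).
Qed.

Lemma count_succ_mem M (S : seq nat) : uniq S -> all (gtn M) S ->
  2 * size S <= M.+1 + count (mem (map succn S)) S.
Proof.
(* The successors of S and the elements of S without a predecessor in S are
   distinct points of [0, M]. *)
move=> S_uniq /allP S_lt; set T := map succn S; set R := filter (predC (mem T)) S.
have TR_uniq : uniq (T ++ R).
  rewrite cat_uniq map_inj_uniq ?filter_uniq //=; last by move=> ? ? [].
  by rewrite S_uniq andbT; apply/hasPn => x; rewrite mem_filter => /andP [].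
have TR_sub : {subset T ++ R <= iota 0 M.+1}.
  move=> x; rewrite mem_cat mem_iota /= ltnS => /orP [/mapP [y /S_lt lt_yM ->] //|].
  by rewrite mem_filter => /andP [_ /S_lt /ltnW].
have := uniq_leq_size TR_uniq TR_sub.
by rewrite size_cat size_map size_filter size_iota -(count_predC (mem T) S); lia.
Qed.

Lemma antireg_separates M p q : 0 < p -> 0 < q -> p != q ->
  exists2 w, w \in [:: p.-1; q.-1] &
    [&& w != p, w != q & antireg_adj M p w != antireg_adj M q w].
Proof.
(* With equal parities the predecessor of the larger vertex separates them,
   otherwise the predecessor of the smaller one does. *)
move=> p_gt0 q_gt0 neq_pq; rewrite /antireg_adj.
case: (boolP (odd (p + M) == odd (q + M))) => /eqP same_parity.
- case: (ltnP p q) => lt_pq; [exists q.-1 | exists p.-1]; rewrite ?inE ?eqxx ?orbT //; lia.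
- case: (ltnP p q) => lt_pq; [exists p.-1 | exists q.-1]; rewrite ?inE ?eqxx ?orbT //; lia.
Qed.

Lemma induced_sub_antireg_bound b M : induced_sub b (antireg_str M) ->
  2 * size b <= M + 2 + switches b (size b).-1.
Proof.
move=> [f [f_inj f_adj]].
pose S := [seq nat_of_ord (f u) | u <- enum 'I_(size b)].
pose P := [pred u | nat_of_ord (f u) \in map succn S].
have P_pred u : P u -> exists u', nat_of_ord (f u) = (f u').+1.
  by case/mapP=> _ /mapP [u' _ ->] ->; exists u'.
have P_free : {in P &, forall u v, twins u v -> u = v}.
  move=> u v /P_pred [u' fu] /P_pred [v' fv] twins_uv; apply/eqP/negPn/negP => neq_uv.
  have neq_f : nat_of_ord (f u) != f v by rewrite val_eqE (inj_eq f_inj).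
  have fu_gt0 : 0 < f u by rewrite fu.
  have fv_gt0 : 0 < f v by rewrite fv.
  have [w w_in] := antireg_separates M fu_gt0 fv_gt0 neq_f.
  have [x ->] : exists x, w = f x.
    by move: w_in; rewrite !inE fu fv /= => /orP [] /eqP ->; [exists u' | exists v'].
  case/and3P=> fx_u fx_v; rewrite -!tadj_antireg -!f_adj twins_uv ?eqxx //.
    by apply: contraNneq fx_u => ->.
  by apply: contraNneq fx_v => ->.
have S_uniq : uniq S by rewrite map_inj_uniq ?enum_uniq // => u v /val_inj /f_inj.
have S_lt : all (gtn M) S.
  by apply/allP => _ /mapP [u _ ->]; rewrite /= -{2}(size_antireg M).
have := count_succ_mem S_uniq S_lt; have := card_twin_free P_free.
rewrite size_map size_enum_ord count_map cardE size_filter enumT => le_P le_count.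
apply: leq_trans le_count _.
have -> : M + 2 + switches b (size b).-1 = M.+1 + (switches b (size b).-1).+1 by lia.
by rewrite leq_add2l.
Qed.

Fixpoint changes (l : seq bool) : nat :=
  if l is x :: (y :: _) as l' then (x != y) + changes l' else 0.

Lemma changes_cons2 x y l : changes [:: x, y & l] = (x != y) + changes (y :: l).
Proof. by []. Qed.

Lemma changesE l :
  changes l = \sum_(0 <= i < (size l).-1) (nth false l i != nth false l i.+1).
Proof.
elim: l => [|x [|y l] IH]; [by rewrite big_geq | by rewrite big_geq |].
by rewrite changes_cons2 IH [RHS]big_ltn // big_add1.
Qed.

Lemma switches_changes b : switches b (size b).-1 = changes (behead b).
Proof.
case: b => [|x l]; first by rewrite /switches big_geq.
by rewrite /switches changesE big_add1.
Qed.

Lemma changes_nseq c x l : changes (nseq x.+1 c ++ l) = changes (c :: l).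
Proof.
elim: x => // x IH; rewrite -[nseq _ _ ++ l]/[:: c, c & nseq x c ++ l].
by rewrite changes_cons2 eqxx; exact: IH.
Qed.

Lemma changes_cons_nseq c d x l :
  changes (c :: nseq x.+1 d ++ l) = (c != d) + changes (d :: l).
Proof.
rewrite -[c :: _]/[:: c, d & nseq x d ++ l].
by rewrite changes_cons2; congr (_ + _); exact: changes_nseq.
Qed.

Lemma block_str_cons x s y t :
  block_str (x :: s) (y :: t) = nseq x false ++ nseq y true ++ block_str s t.
Proof. by rewrite /block_str /= catA. Qed.

Lemma size_block_str s t :
  size s = size t -> size (block_str s t) = sumn s + sumn t.
Proof.
elim: s t => [|x s IH] [|y t] //= /succn_inj /IH size_st.
by rewrite block_str_cons !size_cat !size_nseq size_st; lia.
Qed.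

Lemma last_block_str s t x0 : size s = size t -> 0 < size s ->
  all (fun y => 0 < y) t -> last x0 (block_str s t) = true.
Proof.
elim: s t x0 => [|x s IH] [|y t] x0 //= /succn_inj size_st _ /andP [y_gt0 t_gt0].
rewrite block_str_cons !last_cat.
case: s t size_st IH t_gt0 => [|x' s] [|y' t] // size_st IH t_gt0; last exact: IH.
by case: y y_gt0 => // y _; elim: y (last x0 _) => // y IHy d; apply: IHy.
Qed.

Lemma changes_true_block_str s t : size s = size t ->
  all (fun x => 0 < x) s -> all (fun y => 0 < y) t ->
  changes (true :: block_str s t) = 2 * size s.
Proof.
elim: s t => [|x s IH] [|y t] // /succn_inj size_st /andP [x_gt0 s_gt0] /andP [y_gt0 t_gt0].
rewrite block_str_cons -(prednK x_gt0) -(prednK y_gt0) !changes_cons_nseq IH //=.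
by rewrite mulnS.
Qed.

Lemma changes_behead_block_str s t : size s = size t -> 0 < size s ->
  all (fun x => 0 < x) s -> all (fun y => 0 < y) t ->
  changes (behead (block_str s t)) =
    if head 0 s == 1 then 2 * size s - 2 else 2 * size s - 1.
Proof.
case: s t => [|[|[|x]] s] [|[|y] t] // /succn_inj size_st _ /andP [_ s_gt0] /andP [_ t_gt0].
  by rewrite block_str_cons [behead _]/= changes_nseq changes_true_block_str //=; lia.
rewrite block_str_cons [behead _]/= changes_nseq changes_cons_nseq.
by rewrite changes_true_block_str //=; lia.
Qed.

Lemma size_le_sumn s : all (fun x => 0 < x) s -> size s <= sumn s.
Proof. by elim: s => //= x s IH /andP [x_gt0 /IH]; lia. Qed.

Theorem theorem3p1 :
  (* every connected threshold graph on n >= 2 vertices embeds in A_{2n-2} *)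
  (forall b : seq bool,
      2 <= size b -> nth false b 0 = false -> last false b = true ->
      induced_sub b (antireg_str (2 * size b - 2)))
  /\
  (* refined version with the block decomposition *)
  (forall s t : seq nat,
      size s = size t -> 0 < size s ->
      all (fun x => 0 < x) s -> all (fun x => 0 < x) t ->
      let b := block_str s t in
      let n := sumn s + sumn t in
      let k := size s in
      let N := if head 0 s == 1 then 2 * (n - k) else 2 * (n - k) - 1 in
      induced_sub b (antireg_str N) /\
      (forall M : nat, induced_sub b (antireg_str M) -> N <= M)).
Proof.
(* The first bit does not affect G(b). *)
split=> [b b_ge2 _ b_last | s t size_st s_nonempty s_pos t_pos b n k N].
  apply: induced_sub_trans (induced_sub_antireg_switches b_ge2 b_last) _.
  by apply: induced_sub_antireg_leq; lia.
have size_b : size b = n := size_block_str size_st.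
have le_kn : 2 * k <= n.
  by have := size_le_sumn s_pos; have := size_le_sumn t_pos; rewrite /n /k size_st; lia.
have N_switches : N = (2 * size b).-2 - switches b (size b).-1.
  rewrite switches_changes changes_behead_block_str // size_b /N.
  by case: (head 0 s == 1); lia.
split; first by rewrite N_switches; apply: induced_sub_antireg_switches;
  [lia | exact: last_block_str].
by move=> M /induced_sub_antireg_bound; rewrite N_switches; lia.
Qed.
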